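(* The set $H:=\{x\in 3^\omega:\exists^\infty n\,(x(n)=2)\}$ is $\mathbb{T}$-comeager; consequently a set $X\subseteq 3^\omega$ is $\mathbb{T}$-measurable iff $X\cap H$ is $\mathbb{T}$-measurable.
   Context: $\mathbb{T}$ is the tree-forcing (ordered by inclusion) consisting of perfect trees $p\subseteq 3^{<\omega}$ together with a set $A_p\subseteq\omega$ (the splitting levels of $p$) such that: for every $t\in p$, $|t|\in A_p$ iff $t$ is a splitting node of $p$; every splitting node $t$ is fully splitting (i.e. $t^\frown i\in p$ for every $i\in 3$); for every $s\supseteq \mathrm{stem}(p)$ which is not splitting, $s^\frown 2\notin p$; and for all non-splitting $s,t\in p$ with $|s|=|t|$ and all $i\in 2$, $s^\frown i\in p\Leftrightarrow t^\frown i\in p$. Here $s^\frown i$ denotes $s$ extended by the value $i$. $X$ is $\mathbb{T}$-nowhere dense if every $p$ has $q\leq p$ with $[q]\cap X=\emptyset$; $\mathbb{T}$-meager means a countable union of such sets; $X$ is $\mathbb{T}$-measurable if every $p$ has $q\leq p$ with $[q]\cap X$ or $[q]\setminus X$ $\mathbb{T}$-meager. *)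

From mathcomp Require Import all_boot.
Set Implicit Arguments. Unset Strict Implicit. Unset Printing Implicit Defensive.

Definition node := seq 'I_3.
Definition point := nat -> 'I_3.
Definition tree := node -> Prop.
Definition pset := point -> Prop.

Definition splitting (p : tree) (t : node) : Prop :=
  p t /\ exists i j : 'I_3, i != j /\ p (rcons t i) /\ p (rcons t j).

Definition fully_splitting (p : tree) (t : node) : Prop :=
  forall i : 'I_3, p (rcons t i).

Definition perfect_tree (p : tree) : Prop :=
  p [::] /\
  (forall s t : node, p t -> prefix s t -> p s) /\
  (forall t, p t -> exists i : 'I_3, p (rcons t i)) /\
  (forall t, p t -> exists s, prefix t s /\ splitting p s).

Definition is_stem (p : tree) (t : node) : Prop :=
  splitting p t /\ forall s, p s -> prefix t s \/ prefix s t.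

Definition Tcond (p : tree) (A : nat -> Prop) : Prop :=
  perfect_tree p /\
  (forall t, p t -> (A (size t) <-> splitting p t)) /\
  (forall t, splitting p t -> fully_splitting p t) /\
  (forall st s, is_stem p st -> p s -> prefix st s -> ~ splitting p s ->
      ~ p (rcons s (inord 2))) /\
  (forall s t : node, p s -> p t -> ~ splitting p s -> ~ splitting p t ->
      size s = size t ->
      forall i : 'I_3, (i < 2)%N -> (p (rcons s i) <-> p (rcons t i))).

Definition inT (p : tree) : Prop := exists A, Tcond p A.

Definition Tle (q p : tree) : Prop := forall t, q t -> p t.

Definition body (q : tree) : pset := fun x => forall n, q (mkseq x n).

Definition T_nowhere_dense (X : pset) : Prop :=
  forall p, inT p -> exists q, inT q /\ Tle q p /\ forall x, body q x -> ~ X x.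

Definition T_meager (X : pset) : Prop :=
  exists Y : nat -> pset, (forall n, T_nowhere_dense (Y n)) /\
    (forall x, X x <-> exists n, Y n x).

Definition T_comeager (X : pset) : Prop := T_meager (fun x => ~ X x).

Definition T_measurable (X : pset) : Prop :=
  forall p, inT p -> exists q, inT q /\ Tle q p /\
    (T_meager (fun x => body q x /\ X x) \/
     T_meager (fun x => body q x /\ ~ X x)).

Definition Hset : pset := fun x => forall m, exists n, (m <= n)%N /\ nat_of_ord (x n) = 2.

From mathcomp Require Import all_boot.
From Stdlib Require Import Classical.
Set Implicit Arguments. Unset Strict Implicit. Unset Printing Implicit Defensive.

(* For each m, the set of x with no 2 after position m is T-nowhere dense: given
   a condition p, pick a splitting node s of length at least m and keep only the
   part of p through s^2.  This is again a condition (its splitting levels are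
   those of p above |s^2|, and it lies above the stem of p, so the ban on the
   digit 2 at non-splitting nodes is inherited), and all its branches take the
   value 2 at |s|.  The complement of H is the union of these sets, hence
   T-meager; and two sets that agree on a T-comeager set are simultaneously
   T-measurable, because T-meager sets form a sigma-ideal. *)

Section Prefix.

Variable T : eqType.
Implicit Types a b c t : seq T.

Lemma prefix_takeE a c : prefix a c -> take (size a) c = a.
Proof. by rewrite prefixE => /eqP. Qed.

Lemma prefix_size_inj a b c : prefix a c -> prefix b c -> size a = size b -> a = b.
Proof. by move=> /prefix_takeE Ha /prefix_takeE Hb Eab; rewrite -Ha -Hb Eab. Qed.

Lemma prefix_leq_size_eq a b : prefix a b -> size b <= size a -> a = b.
Proof.
move=> Hab Hba; apply: (prefix_size_inj Hab (prefix_refl b)).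
by apply/anti_leq; rewrite Hba (size_prefix Hab).
Qed.

Lemma prefix_total a b c : prefix a c -> prefix b c -> prefix a b || prefix b a.
Proof.
move=> /prefix_takeE Ha /prefix_takeE Hb; rewrite !prefixE.
case: (leqP (size a) (size b)) => Hab; apply/orP; [left|right]; apply/eqP.
  by rewrite -[in RHS]Ha -Hb take_takel.
by rewrite -[in RHS]Hb -Ha take_takel // ltnW.
Qed.

Lemma prefix_rcons_nth x0 t c :
  prefix t c -> size t < size c -> prefix (rcons t (nth x0 c (size t))) c.
Proof. by move=> Htc Hlt; rewrite -{1}(prefix_takeE Htc) -take_nth // prefix_take. Qed.

End Prefix.

Section PerfectTree.

Variable p : tree.
Hypothesis p_perfect : perfect_tree p.

Lemma perfect_tree_closed s t : p t -> prefix s t -> p s.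
Proof. by case: p_perfect => _ [Hcl _]; apply: Hcl. Qed.

Lemma minimal_splitting s : splitting p s ->
  exists s0, splitting p s0 /\ forall t, splitting p t -> size s0 <= size t.
Proof.
suff: forall n s, size s = n -> splitting p s ->
    exists s0, splitting p s0 /\ forall t, splitting p t -> size s0 <= size t.
  by apply.
elim/ltn_ind=> n IH {}s Hsn Hs.
case: (classic (exists t, splitting p t /\ size t < n)) => [[t [Ht Htn]]|Hnone].
  exact: IH Htn t erefl Ht.
exists s; split=> // t Ht; rewrite Hsn leqNgt; apply/negP=> Htn.
by apply: Hnone; exists t.
Qed.

Lemma prefix_minimal_splitting s0 t :
  splitting p s0 -> (forall s, splitting p s -> size s0 <= size s) ->
  p t -> size t <= size s0 -> prefix t s0.
Proof.
move=> Hs0 Hmin; elim/last_ind: t => [|t i IH] Hti Hsize; first exact: prefix0s.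
rewrite size_rcons in Hsize.
have Hts0 := IH (perfect_tree_closed Hti (prefix_rcons t i)) (ltnW Hsize).
set j := nth ord0 s0 (size t).
have Htj : prefix (rcons t j) s0 by apply: prefix_rcons_nth.
case: (eqVneq i j) => [-> //|Hij].
have Ht_split : splitting p t.
  split; first exact: perfect_tree_closed Hti (prefix_rcons t i).
  by exists i, j; split; last split; last exact: perfect_tree_closed (proj1 Hs0) Htj.
by have := Hmin t Ht_split; rewrite leqNgt Hsize.
Qed.

Lemma stem_exists s : splitting p s -> exists s0, is_stem p s0 /\ size s0 <= size s.
Proof.
move=> Hs; have [s0 [Hs0 Hmin]] := minimal_splitting Hs.
exists s0; split; last exact: Hmin.
split=> // t Ht; case: (leqP (size t) (size s0)) => Hts0.
  by right; apply: prefix_minimal_splitting.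
left; set t0 := take (size s0) t.
have Ht0 : p t0 by apply: perfect_tree_closed Ht (prefix_take _ _).
have Ht0_size : size t0 = size s0 by rewrite size_take Hts0.
have Ht0s0 : prefix t0 s0 by apply: prefix_minimal_splitting; rewrite ?Ht0_size.
rewrite -(prefix_leq_size_eq Ht0s0) ?Ht0_size //; exact: prefix_take.
Qed.

Lemma splitting_above m : exists s, splitting p s /\ m <= size s.
Proof.
case: p_perfect => Hroot [_ [Hpruned Hext]].
have [t [Ht <-]] : exists t, p t /\ size t = m.
  elim: m => [|m [t [Ht <-]]]; first by exists [::].
  by have [i Hi] := Hpruned t Ht; exists (rcons t i); rewrite size_rcons.
by have [s [Hts Hs]] := Hext t Ht; exists s; rewrite size_prefix.
Qed.

End PerfectTree.

Definition restrict (p : tree) (u : node) : tree :=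
  fun t => p t /\ (prefix t u || prefix u t).

Section Restrict.

Variables (p : tree) (u : node).

Lemma restrict_above t : prefix u t -> restrict p u t <-> p t.
Proof. by move=> Hut; split=> [[] //|Ht]; split; rewrite ?Hut ?orbT. Qed.

Lemma restrict_rcons_above t i : prefix u t -> restrict p u (rcons t i) <-> p (rcons t i).
Proof. by move=> Hut; apply/restrict_above/(prefix_trans Hut)/prefix_rcons. Qed.

Lemma restrict_long t : restrict p u t -> size u <= size t -> prefix u t.
Proof.
case=> _ /orP [Htu|//] Hut.
by rewrite (prefix_leq_size_eq Htu Hut) prefix_refl.
Qed.

Lemma restrict_short t : restrict p u t -> size t <= size u -> prefix t u.
Proof.
case=> _ /orP [//|Hut] Htu.
by rewrite (prefix_leq_size_eq Hut Htu) prefix_refl.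
Qed.

Lemma splitting_restrict_above t :
  prefix u t -> splitting (restrict p u) t <-> splitting p t.
Proof.
move=> Hut; rewrite /splitting restrict_above //.
by split=> -[Ht [i [j [Hij [Hi Hj]]]]]; split=> //; exists i, j;
  rewrite ?(restrict_rcons_above _ Hut) in Hi Hj *.
Qed.

Lemma splitting_restrict_prefix t : splitting (restrict p u) t -> prefix u t.
Proof.
move=> [Ht [i [j [Hij [Hi Hj]]]]].
case: (leqP (size u) (size t)) => [|Htu]; first exact: restrict_long.
have Hiu : prefix (rcons t i) u by apply: (restrict_short Hi); rewrite size_rcons.
have Hju : prefix (rcons t j) u by apply: (restrict_short Hj); rewrite size_rcons.
have Eij : i = j.
  by apply: (@rcons_injr _ t); apply: prefix_size_inj Hiu Hju _; rewrite !size_rcons.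
by rewrite Eij eqxx in Hij.
Qed.

Lemma restrict_perfect : perfect_tree p -> p u -> perfect_tree (restrict p u).
Proof.
move=> Hp Hu; have [_ [_ [Hpruned Hext]]] := Hp.
split; [|split; [|split]].
- by split; rewrite ?prefix0s; case: Hp.
- move=> s t [Ht Htu] Hst; split; first exact: perfect_tree_closed Ht Hst.
  case/orP: Htu => [Htu|Hut]; first by rewrite (prefix_trans Hst Htu).
  exact: prefix_total Hst Hut.
- move=> t Ht; case: (leqP (size u) (size t)) => [/(restrict_long Ht) Hut|Htu].
    by have [i Hi] := Hpruned t (proj1 Ht); exists i; apply/restrict_rcons_above.
  have Hti := prefix_rcons_nth ord0 (restrict_short Ht (ltnW Htu)) Htu.
  exists (nth ord0 u (size t)); split; first exact: perfect_tree_closed Hu Hti.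
  by rewrite Hti.
- move=> t Ht; case: (leqP (size u) (size t)) => [/(restrict_long Ht) Hut|Htu].
    have [s [Hts Hs]] := Hext t (proj1 Ht).
    by exists s; rewrite splitting_restrict_above // (prefix_trans Hut Hts).
  have [s [Hus Hs]] := Hext u Hu.
  exists s; rewrite splitting_restrict_above //.
  by rewrite (prefix_trans (restrict_short Ht (ltnW Htu)) Hus).
Qed.

End Restrict.

Lemma restrict_Tcond p A s u : Tcond p A -> splitting p s -> size s <= size u -> p u ->
  Tcond (restrict p u) (fun n => A n /\ size u <= n).
Proof.
move=> [Hp [Hlevels [Hfull [Hstem Hunif]]]] Hs Hsu Hu.
split; [exact: restrict_perfect|split; [|split; [|split]]].
- move=> t Ht; case: (leqP (size u) (size t)) => [Hut|Htu].
    rewrite splitting_restrict_above ?(restrict_long Ht) // -Hlevels; last exact: proj1 Ht.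
    by split=> [[] //|]; split.
  by split=> [[_ //]|/splitting_restrict_prefix/size_prefix]; rewrite leqNgt Htu.
- move=> t Hst i; have Hut := splitting_restrict_prefix Hst.
  apply/restrict_rcons_above => //; apply: Hfull.
  by rewrite -(splitting_restrict_above _ Hut).
- (* [size s <= size u] puts [u], hence [t], above the stem of [p]. *)
  move=> st t [Hst _] Ht Hstt Hnsplit /restrict_rcons_above Ht2.
  have Hut := prefix_trans (splitting_restrict_prefix Hst) Hstt.
  rewrite splitting_restrict_above // in Hnsplit.
  have [s0 [Hs0 Hs0s]] := stem_exists Hp Hs.
  have Hs0t : prefix s0 t.
    case: (proj2 Hs0 t (proj1 Ht)) => [//|Hts0].
    rewrite (prefix_leq_size_eq Hts0) ?prefix_refl //.
    exact: leq_trans Hs0s (leq_trans Hsu (size_prefix Hut)).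
  exact: Hstem Hs0 (proj1 Ht) Hs0t Hnsplit (Ht2 Hut).
- move=> s1 t1 Hs1 Ht1 Hns1 Hnt1 Hst i Hi.
  case: (leqP (size u) (size s1)) => [Hus1|Hs1u].
    have Hu1 := restrict_long Hs1 Hus1.
    have Hu2 : prefix u t1 by apply: restrict_long Ht1 _; rewrite -Hst.
    rewrite !restrict_rcons_above //.
    rewrite splitting_restrict_above // in Hns1; rewrite splitting_restrict_above // in Hnt1.
    exact: Hunif (proj1 Hs1) (proj1 Ht1) Hns1 Hnt1 Hst i Hi.
  have Hs1u' := restrict_short Hs1 (ltnW Hs1u).
  have Ht1u : prefix t1 u by apply: restrict_short Ht1 _; rewrite -Hst ltnW.
  by rewrite (prefix_size_inj Hs1u' Ht1u Hst).
Qed.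

Definition no_two_from (m : nat) : pset := fun x => forall n, m <= n -> x n <> 2 :> nat.

Lemma no_two_from_nowhere_dense m : T_nowhere_dense (no_two_from m).
Proof.
move=> p [A HpA]; have [Hp [_ [Hfull _]]] := HpA.
have [s [Hs Hms]] := splitting_above Hp m.
set u := rcons s (inord 2).
have Hu : p u by apply: Hfull.
exists (restrict p u); split.
  exists (fun n => A n /\ size u <= n).
  by apply: restrict_Tcond HpA Hs _ Hu; rewrite size_rcons.
split=> [t [] //|x Hx Hno].
have Hxu : u = mkseq x (size u).
  by apply/prefix_leq_size_eq; rewrite ?size_mkseq // (restrict_long (Hx _)) ?size_mkseq.
apply: (Hno (size s) Hms).
have := congr1 (nth ord0 ^~ (size s)) Hxu.
by rewrite /= nth_rcons ltnn eqxx nth_mkseq ?size_rcons // => <-; rewrite inordK.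
Qed.

Lemma T_nowhere_dense_subset (X Y : pset) :
  T_nowhere_dense Y -> (forall x, X x -> Y x) -> T_nowhere_dense X.
Proof.
move=> HY HXY p Hp; have [q [Hq [Hqp Hbody]]] := HY p Hp.
by exists q; do 2 split=> //; move=> x /Hbody Hx /HXY.
Qed.

Lemma T_nowhere_denseU (X Y : pset) : T_nowhere_dense X -> T_nowhere_dense Y ->
  T_nowhere_dense (fun x => X x \/ Y x).
Proof.
move=> HX HY p Hp; have [q1 [Hq1 [Hq1p Hbody1]]] := HX p Hp.
have [q2 [Hq2 [Hq2q1 Hbody2]]] := HY q1 Hq1.
exists q2; split=> //; split=> [t /Hq2q1 /Hq1p //|x Hx [HXx|HYx]]; last exact: Hbody2 Hx HYx.
by apply: (Hbody1 x) HXx => n; apply: Hq2q1.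
Qed.

Lemma T_meager_subset (X Y : pset) : T_meager Y -> (forall x, X x -> Y x) -> T_meager X.
Proof.
move=> [Z [HZ HYZ]] HXY; exists (fun n x => Z n x /\ X x); split.
  by move=> n; apply: T_nowhere_dense_subset (HZ n) _ => x [].
move=> x; split=> [HXx|[n [_ //]]].
by have [n Hn] := proj1 (HYZ x) (HXY x HXx); exists n.
Qed.

Lemma T_meagerU (X Y : pset) : T_meager X -> T_meager Y -> T_meager (fun x => X x \/ Y x).
Proof.
move=> [ZX [HZX HX]] [ZY [HZY HY]]; exists (fun n x => ZX n x \/ ZY n x); split.
  by move=> n; apply: T_nowhere_denseU.
move=> x; split=> [[/HX [n Hn]|/HY [n Hn]]|[n [Hn|Hn]]].
- by exists n; left.
- by exists n; right.
- by left; apply/HX; exists n.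
- by right; apply/HY; exists n.
Qed.

Lemma T_comeager_Hset : T_comeager Hset.
Proof.
exists no_two_from; split; first exact: no_two_from_nowhere_dense.
move=> x; split=> [/not_all_ex_not [m Hm]|[m Hm] HH].
  by exists m => n Hmn Hxn; apply: Hm; exists n.
by have [n [Hmn Hxn]] := HH m; exact: Hm n Hmn Hxn.
Qed.

Lemma T_measurable_comeager_eq (E X Y : pset) : T_comeager E ->
  (forall x, E x -> (X x <-> Y x)) -> T_measurable X -> T_measurable Y.
Proof.
move=> HE HXY HX p Hp; have [q [Hq [Hqp Hmeager]]] := HX p Hp.
exists q; do 2 split=> //.
case: Hmeager => Hmeager; [left|right];
  apply: T_meager_subset (T_meagerU Hmeager HE) _ => x [Hx HYx];
  (case: (classic (E x)) => HEx; [left; split=> //|by right]).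
- by apply/HXY.
- by rewrite HXY.
Qed.

Theorem mainTheorem9 :
  T_comeager Hset /\
  (forall X : pset, T_measurable X <-> T_measurable (fun x => X x /\ Hset x)).
Proof.
split=> [|X]; first exact: T_comeager_Hset.
have HXH x : Hset x -> (X x <-> X x /\ Hset x) by tauto.
split; apply: T_measurable_comeager_eq T_comeager_Hset _ => x /HXH HXx //.
exact: iff_sym HXx.
Qed.
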